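(* Let $d\ge1$, $z\ge 0$, let $0<\varphi_1\le\cdots\le\varphi_d$ and let $\tilde v_1,\ldots,\tilde v_d\in\mathbb C$ be nonzero. Let $\varphi_{\max}=\varphi_d$ and define, for $\lambda>0$ with $\lambda\notin\{\varphi_1,\dots,\varphi_d\}$, $$f(\lambda)=\lambda^2\sum_{m=1}^d\frac{\varphi_m|\tilde v_m|^2}{(\lambda-\varphi_m)^2}-\lambda+z.$$ Then $f$ has (1) no roots smaller than or equal to $z$; (2) zero, one, or two roots in $(z,\varphi_k)$, where $\varphi_k$ is the smallest eigenvalue $\varphi_m$ larger than $z$ (if such an eigenvalue exists); (3) zero, one, or two roots in $(\varphi_{L-1},\varphi_L)$ for each $L=k+1,\ldots,d$; (4) a unique root in the interval $(\max(\varphi_{\max},z),+\infty)$.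
   Context: This lemma is stated under the standing assumption that all indices are in the support $\mathcal S=\{m:\varphi_m|\tilde v_m|^2\neq0\}$, i.e. $\mathcal S=\{1,\dots,d\}$; here $\varphi_1,\ldots,\varphi_d$ are the eigenvalues of a Hermitian positive semi-definite matrix $\mathbf U$ and $\tilde v_m$ the coordinates of a vector $\mathbf v$ in the corresponding eigenbasis (this origin is not needed for the statement). *)

From HB Require Import structures.
From mathcomp Require Import all_boot all_order all_algebra.
From mathcomp Require Import complex.
Set Implicit Arguments. Unset Strict Implicit. Unset Printing Implicit Defensive.
Import Order.TTheory GRing.Theory Num.Theory.
Local Open Scope ring_scope.

(* Division is total in MathComp; f is only
   meaningful (and only used) at l > 0 with l not an eigenvalue. *)
Definition fsec (R : rcfType) (d : nat) (phi : 'I_d -> R) (v : 'I_d -> R[i])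
  (z l : R) : R :=
  l ^+ 2 * (\sum_(m < d) phi m * ComplexField.Normc.normc (v m) ^+ 2 / (l - phi m) ^+ 2) - l + z.

Definition is_root_f (R : rcfType) (d : nat) (phi : 'I_d -> R) (v : 'I_d -> R[i])
  (z l : R) : Prop :=
  0 < l /\ (forall m : 'I_d, l != phi m) /\ fsec phi v z l = 0.

Definition at_most_two_roots_in (R : rcfType) (d : nat) (phi : 'I_d -> R)
  (v : 'I_d -> R[i]) (z a b : R) : Prop :=
  forall l1 l2 l3 : R,
    a < l1 < b -> a < l2 < b -> a < l3 < b ->
    is_root_f phi v z l1 -> is_root_f phi v z l2 -> is_root_f phi v z l3 ->
    l1 = l2 \/ l1 = l3 \/ l2 = l3.

From HB Require Import structures.
From mathcomp Require Import all_boot all_order all_algebra.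
From mathcomp Require Import complex polyrcf ring lra.
Import Order.TTheory GRing.Theory Num.Theory.
Set Implicit Arguments. Unset Strict Implicit. Unset Printing Implicit Defensive.
Local Open Scope ring_scope.

(* Put w_m = phi_m |v_m|^2 and t = 1/l.  For l > 0 off the spectrum,
   f(l) = l (K(t) - 1), where K(t) = sum_m w_m t / (1 - phi_m t)^2 + z t is the
   function [secular] below; so the roots of f are the solutions of K(t) = 1.
   Each term t / (1 - phi t)^2 has positive second divided differences on
   either side of its pole 1/phi, so K is strictly convex between consecutive
   poles and takes the value 1 at most twice there.  Since K(t) > z t, a root
   has z t < 1, i.e. l > z.  On [0, 1/phi_max) K increases strictly from
   K(0) = 0 and exceeds 1 at t = 1/(phi_max + w_max), which gives exactly one
   root beyond phi_max (by the intermediate value theorem, once the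
   denominators are cleared). *)

Lemma sumr_ord_gt0 (R : numDomainType) (n : nat) (F : 'I_n -> R) :
  (0 < n)%N -> (forall i, 0 < F i) -> 0 < \sum_(i < n) F i.
Proof.
move=> n_gt0 F_gt0; rewrite (bigD1 (Ordinal n_gt0)) //=.
by rewrite ltr_pwDl // sumr_ge0 // => i _; apply/ltW.
Qed.

Section DividedDifference.

Variables (R : fieldType) (t1 t2 t3 : R).

Definition divdiff2 (f : R -> R) : R :=
  f t1 / ((t1 - t2) * (t1 - t3)) + f t2 / ((t2 - t1) * (t2 - t3))
  + f t3 / ((t3 - t1) * (t3 - t2)).

Lemma divdiff2D (f g : R -> R) :
  divdiff2 (fun t => f t + g t) = divdiff2 f + divdiff2 g.
Proof. by rewrite /divdiff2 !mulrDl; ring. Qed.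

Lemma divdiff2Z (c : R) (f : R -> R) :
  divdiff2 (fun t => c * f t) = c * divdiff2 f.
Proof. by rewrite /divdiff2; ring. Qed.

Lemma divdiff2_sum (I : Type) (r : seq I) (F : I -> R -> R) :
  divdiff2 (fun t => \sum_(i <- r) F i t) = \sum_(i <- r) divdiff2 (F i).
Proof. by rewrite /divdiff2 !mulr_suml -!big_split. Qed.

Hypotheses (t12 : t1 != t2) (t13 : t1 != t3) (t23 : t2 != t3).

Lemma divdiff2_linear (a : R) : divdiff2 (fun t => a * t) = 0.
Proof.
rewrite /divdiff2; field.
by rewrite !subr_eq0 t12 t13 t23 ![_ == t1]eq_sym t12 t13 eq_sym t23.
Qed.

Lemma divdiff2_const (f : R -> R) (c : R) :
  f t1 = c -> f t2 = c -> f t3 = c -> divdiff2 f = 0.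
Proof.
by move=> f1 f2 f3; rewrite /divdiff2 f1 f2 f3; field;
  rewrite !subr_eq0 t12 t13 t23 ![_ == t1]eq_sym t12 t13 eq_sym t23.
Qed.

End DividedDifference.

Definition secular_term (R : fieldType) (p t : R) : R := t / (1 - p * t) ^+ 2.

Lemma secular_termV (R : fieldType) (p l : R) : l != 0 ->
  secular_term p l^-1 = l / (l - p) ^+ 2.
Proof.
move=> l_neq0; have [<- | l_neq_p] := eqVneq l p.
  by rewrite /secular_term mulfV // !subrr expr0n /= !invr0 !mulr0.
by rewrite /secular_term; field; rewrite subr_eq0 l_neq_p.
Qed.

Section SecularTerm.

Variable R : realFieldType.

Lemma secular_term_ge0 (p t : R) : 0 <= t -> 0 <= secular_term p t.
Proof. by move=> t_ge0; rewrite divr_ge0 ?sqr_ge0. Qed.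

Lemma secular_term_gt0 (p t : R) : 0 < t -> p * t != 1 -> 0 < secular_term p t.
Proof.
move=> t_gt0 pt_neq1; rewrite divr_gt0 // exprn_even_gt0 //=.
by rewrite subr_eq0 eq_sym.
Qed.

Lemma secular_term_lt (p t t' : R) : 0 < p -> 0 <= t -> t < t' -> p * t' < 1 ->
  secular_term p t < secular_term p t'.
Proof.
move=> p_gt0 t_ge0 tt' pt'_lt1.
have s'_gt0 : 0 < 1 - p * t' by rewrite subr_gt0.
have s_gt_s' : 1 - p * t' < 1 - p * t by rewrite ltrD2l ltrN2 ltr_pM2l.
have s_gt0 : 0 < 1 - p * t by apply: lt_trans s_gt_s'.
rewrite /secular_term ltr_pdivrMr ?exprn_gt0 // mulrAC ltr_pdivlMr ?exprn_gt0 //.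
apply: (@le_lt_trans _ _ (t * (1 - p * t) ^+ 2)).
  by rewrite ler_wpM2l // lerXn2r ?nnegrE ?ltW.
by rewrite ltr_pM2r ?exprn_gt0.
Qed.

Lemma divdiff2_secular_term_gt0 (p t1 t2 t3 : R) :
  0 < p -> 0 < t1 -> 0 < t2 -> 0 < t3 -> t1 != t2 -> t1 != t3 -> t2 != t3 ->
  [/\ p * t1 < 1, p * t2 < 1 & p * t3 < 1] \/ [/\ 1 < p * t1, 1 < p * t2 & 1 < p * t3] ->
  0 < divdiff2 t1 t2 t3 (secular_term p).
Proof.
move=> p_gt0 t1_gt0 t2_gt0 t3_gt0 t12 t13 t23 side.
set s1 := 1 - p * t1; set s2 := 1 - p * t2; set s3 := 1 - p * t3.
have s_neq0 : [/\ s1 != 0, s2 != 0 & s3 != 0].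
  rewrite /s1 /s2 /s3 !subr_eq0 ![1 == _]eq_sym.
  by case: side => -[? ? ?]; [rewrite !lt_eqF | rewrite !gt_eqF].
case: s_neq0 => s1_neq0 s2_neq0 s3_neq0.
have -> : divdiff2 t1 t2 t3 (secular_term p) =
    p * (s1 * s2 + s1 * s3 + s2 * s3 - s1 * s2 * s3) / (s1 * s2 * s3) ^+ 2.
  rewrite /divdiff2 /secular_term /s1 /s2 /s3; field.
  rewrite -/s1 -/s2 -/s3 s1_neq0 s2_neq0 s3_neq0 !subr_eq0.
  by rewrite [t3 == t2]eq_sym [t3 == t1]eq_sym [t2 == t1]eq_sym t12 t13 t23.
rewrite divr_gt0 ?exprn_even_gt0 ?mulf_neq0 // pmulr_rgt0 //.
case: side => -[pt1 pt2 pt3].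
- have [s1_gt0 s2_gt0 s3_gt0] : [/\ 0 < s1, 0 < s2 & 0 < s3].
    by split; rewrite subr_gt0.
  have [s1_lt1 s2_lt1 s3_lt1] : [/\ s1 < 1, s2 < 1 & s3 < 1].
    by split; rewrite gtrBl mulr_gt0.
  (* the numerator is s1 s2 (1 - s3) + s3 (s1 + s2) *)
  have := mulr_gt0 s1_gt0 s2_gt0; clearbody s1 s2 s3; nra.
- have [s1_lt0 s2_lt0 s3_lt0] : [/\ s1 < 0, s2 < 0 & s3 < 0].
    by split; rewrite subr_lt0.
  have : 0 < s1 * s2 by rewrite nmulr_rgt0.
  clearbody s1 s2 s3; nra.
Qed.

End SecularTerm.

Section Secular.

Variables (R : realFieldType) (d : nat) (w phi : 'I_d -> R) (z : R).
Hypotheses (d_gt0 : (0 < d)%N) (w_gt0 : forall m, 0 < w m)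
  (phi_gt0 : forall m, 0 < phi m) (z_ge0 : 0 <= z).

Definition secular (t : R) : R :=
  \sum_(m < d) w m * secular_term (phi m) t + z * t.

Lemma secular_gt_linear t : 0 < t -> (forall m, phi m * t != 1) -> z * t < secular t.
Proof.
move=> t_gt0 nopole; rewrite /secular ltr_pwDl //.
by apply: sumr_ord_gt0 => // m; rewrite mulr_gt0 ?secular_term_gt0.
Qed.

Lemma secular_lt t t' : 0 <= t -> t < t' -> (forall m, phi m * t' < 1) ->
  secular t < secular t'.
Proof.
move=> t_ge0 tt' below; rewrite /secular ltr_leD ?ler_wpM2l //; last exact: ltW.
rewrite -subr_gt0 -sumrB; apply: sumr_ord_gt0 => // m.
by rewrite -mulrBr mulr_gt0 // subr_gt0 secular_term_lt.
Qed.

Lemma secular_inj t t' : 0 <= t -> 0 <= t' ->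
  (forall m, phi m * t < 1) -> (forall m, phi m * t' < 1) ->
  secular t = secular t' -> t = t'.
Proof.
move=> t_ge0 t'_ge0 below below' eq_sec; case: (ltgtP t t') => // [tt' | t't].
  by have := secular_lt t_ge0 tt' below'; rewrite eq_sec ltxx.
by have := secular_lt t'_ge0 t't below; rewrite eq_sec ltxx.
Qed.

Lemma secular_gt1_near_pole m : 1 < secular (phi m + w m)^-1.
Proof.
have pw_gt0 : 0 < phi m + w m by rewrite addr_gt0.
have term_m : w m * secular_term (phi m) (phi m + w m)^-1 = (phi m + w m) / w m.
  by rewrite /secular_term; field; rewrite !gt_eqF.
rewrite /secular (bigD1 m) //= term_m -addrA ltr_wpDr //.
  apply: addr_ge0; last by apply: divr_ge0 => //; apply: ltW.
  apply: sumr_ge0 => j _.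
  by rewrite mulr_ge0 ?secular_term_ge0 ?invr_ge0 ?ltW.
by rewrite ltr_pdivlMr // mul1r ltrDr.
Qed.

Lemma divdiff2_secular t1 t2 t3 : t1 != t2 -> t1 != t3 -> t2 != t3 ->
  divdiff2 t1 t2 t3 secular =
  \sum_(m < d) w m * divdiff2 t1 t2 t3 (secular_term (phi m)).
Proof.
move=> t12 t13 t23; rewrite /secular divdiff2D divdiff2_linear // addr0.
by rewrite divdiff2_sum; apply: eq_bigr => m _; rewrite divdiff2Z.
Qed.

Lemma secular_inv_eq1_at_most_twice a b l1 l2 l3 :
  0 <= a -> (forall m, phi m <= a \/ b <= phi m) ->
  a < l1 < b -> a < l2 < b -> a < l3 < b ->
  secular l1^-1 = 1 -> secular l2^-1 = 1 -> secular l3^-1 = 1 ->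
  l1 = l2 \/ l1 = l3 \/ l2 = l3.
Proof.
move=> a_ge0 gap /andP[al1 l1b] /andP[al2 l2b] /andP[al3 l3b] e1 e2 e3.
have [-> | l12] := eqVneq l1 l2; first by left.
have [-> | l13] := eqVneq l1 l3; first by right; left.
have [-> | l23] := eqVneq l2 l3; first by right; right.
exfalso.
have side m : [/\ phi m * l1^-1 < 1, phi m * l2^-1 < 1 & phi m * l3^-1 < 1] \/
              [/\ 1 < phi m * l1^-1, 1 < phi m * l2^-1 & 1 < phi m * l3^-1].
  case: (gap m) => h; [left | right];
    by split; rewrite (ltr_pdivrMr, ltr_pdivlMr) ?mul1r; lra.
have pos : 0 < divdiff2 l1^-1 l2^-1 l3^-1 secular.
  rewrite divdiff2_secular ?(inj_eq invr_inj) //; apply: sumr_ord_gt0 => // m.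
  by rewrite mulr_gt0 // divdiff2_secular_term_gt0 ?(inj_eq invr_inj) ?invr_gt0 //; lra.
by rewrite (divdiff2_const _ _ _ e1 e2 e3) ?(inj_eq invr_inj) // ltxx in pos.
Qed.

Definition secular_poly : {poly R} :=
  \sum_(m < d) (w m)%:P * 'X * \prod_(j < d | j != m) (1 - (phi j)%:P * 'X) ^+ 2
  + (z%:P * 'X - 1) * \prod_(j < d) (1 - (phi j)%:P * 'X) ^+ 2.

Lemma horner_secular_poly t : (forall m, phi m * t != 1) ->
  secular_poly.[t] = (secular t - 1) * \prod_(j < d) (1 - phi j * t) ^+ 2.
Proof.
move=> nopole.
have horner_prodq (P : pred 'I_d) :
    (\prod_(j < d | P j) (1 - (phi j)%:P * 'X) ^+ 2).[t] =
    \prod_(j < d | P j) (1 - phi j * t) ^+ 2.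
  by rewrite horner_prod; apply: eq_bigr => j _; rewrite !hornerE.
have horner_term m :
    ((w m)%:P * 'X * \prod_(j < d | j != m) (1 - (phi j)%:P * 'X) ^+ 2).[t] =
    w m * secular_term (phi m) t * \prod_(j < d) (1 - phi j * t) ^+ 2.
  have sm_neq0 : 1 - phi m * t != 0 by rewrite subr_eq0 eq_sym nopole.
  rewrite hornerM horner_prodq !hornerE [in RHS](bigD1 m) //= /secular_term.
  by field.
rewrite /secular_poly hornerD horner_sum hornerM horner_prodq !hornerE.
rewrite (eq_bigr _ (fun m _ => horner_term m)) -mulr_suml /secular; ring.
Qed.

End Secular.

Lemma exists_secular_eq1_below_poles (R : rcfType) (d : nat) (w phi : 'I_d -> R) (z : R)
    (dm : 'I_d) :
  (forall m, 0 < w m) -> (forall m, 0 < phi m) -> 0 <= z ->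
  (forall m, phi m <= phi dm) ->
  exists t, [/\ 0 < t, phi dm * t < 1 & secular w phi z t = 1].
Proof.
move=> w_gt0 phi_gt0 z_ge0 phi_le_max.
pose t0 := (phi dm + w dm)^-1.
have t0_gt0 : 0 < t0 by rewrite invr_gt0 addr_gt0.
have below t : 0 <= t <= t0 -> forall m, phi m * t < 1.
  move=> /andP[t_ge0 t_le] m; apply: (le_lt_trans (y := phi dm * t0)).
    by rewrite (ler_pM (ltW (phi_gt0 m))).
  by rewrite ltr_pdivrMr ?addr_gt0 // mul1r ltrDl.
have denom_gt0 t : 0 <= t <= t0 -> 0 < \prod_(j < d) (1 - phi j * t) ^+ 2.
  by move=> t_in; apply: prodr_gt0 => j _; rewrite exprn_gt0 // subr_gt0 below.
have nopole t : 0 <= t <= t0 -> forall m, phi m * t != 1.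
  by move=> t_in m; rewrite lt_eqF ?below.
have t0_in : 0 <= t0 <= t0 by rewrite ltW ?lexx.
have zero_in : (0 : R) <= 0 <= t0 by rewrite lexx ltW.
have P0_lt0 : (secular_poly w phi z).[0] < 0.
  rewrite horner_secular_poly; last exact: nopole 0 zero_in.
  rewrite pmulr_llt0 ?denom_gt0 // subr_lt0 /secular /secular_term mulr0 addr0.
  by rewrite big1 ?ltr01 // => m _; rewrite mul0r mulr0.
have Pt0_gt0 : 0 < (secular_poly w phi z).[t0].
  rewrite horner_secular_poly; last exact: nopole t0 t0_in.
  by rewrite mulr_gt0 ?denom_gt0 // subr_gt0 secular_gt1_near_pole.
have sign_change : (secular_poly w phi z).[0] * (secular_poly w phi z).[t0] < 0.
  by rewrite nmulr_rlt0.
have [t] := poly_ivtoo (ltW t0_gt0) sign_change.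
rewrite in_itv /= => /andP[t_gt0 t_lt] /rootP.
have t_in : 0 <= t <= t0 by rewrite !ltW.
rewrite horner_secular_poly; last exact: nopole t t_in.
move=> /eqP; rewrite mulf_eq0 (gt_eqF (denom_gt0 _ t_in)) orbF subr_eq0.
by move=> /eqP sec_t; exists t; rewrite below.
Qed.

Lemma normc_gt0 (R : rcfType) (x : R[i]) : x != 0 -> 0 < ComplexField.Normc.normc x.
Proof.
move=> x_neq0; rewrite lt_def; apply/andP; split.
  by apply: contra x_neq0 => /eqP/ComplexField.Normc.eq0_normc ->.
by case: x {x_neq0} => a b; apply: sqrtr_ge0.
Qed.

Definition secular_weight (R : rcfType) (d : nat) (phi : 'I_d -> R) (v : 'I_d -> R[i])
  (m : 'I_d) : R := phi m * ComplexField.Normc.normc (v m) ^+ 2.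

Section SecularRoots.

Variables (R : rcfType) (d : nat) (z : R) (phi : 'I_d -> R) (v : 'I_d -> R[i]).

Local Notation w := (secular_weight phi v).

Lemma fsecE l : l != 0 -> fsec phi v z l = l * (secular w phi z l^-1 - 1).
Proof.
move=> l_neq0.
have term m : l * (w m * secular_term (phi m) l^-1) =
    l ^+ 2 * (phi m * ComplexField.Normc.normc (v m) ^+ 2 / (l - phi m) ^+ 2).
  by rewrite secular_termV // /secular_weight; ring.
rewrite /fsec /secular mulrBr mulr1 mulrDr [in RHS]mulr_sumr.
rewrite (eq_bigr _ (fun m _ => term m)).
by rewrite -mulr_sumr [l * (z / l)]mulrCA mulfV // mulr1 addrAC.
Qed.

Lemma is_root_fP l : is_root_f phi v z l <->
  [/\ 0 < l, forall m, l != phi m & secular w phi z l^-1 = 1].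
Proof.
split=> [[l_gt0 [nopole]] | [l_gt0 nopole sec1]]; rewrite /is_root_f fsecE ?gt_eqF //.
  by move/eqP; rewrite mulf_eq0 gt_eqF //= subr_eq0 => /eqP.
by rewrite sec1 subrr mulr0.
Qed.

Hypotheses (d_gt0 : (0 < d)%N) (z_ge0 : 0 <= z)
  (phi_gt0 : forall m, 0 < phi m) (v_neq0 : forall m, v m != 0).

Let w_gt0 m : 0 < w m.
Proof. by rewrite mulr_gt0 ?exprn_gt0 ?normc_gt0. Qed.

Lemma is_root_f_gt l : is_root_f phi v z l -> z < l.
Proof.
case/is_root_fP => l_gt0 nopole sec1.
have : z * l^-1 < secular w phi z l^-1.
  apply: secular_gt_linear => // [|m]; first by rewrite invr_gt0.
  by apply: contra_neq (nopole m) => /divr1_eq ->.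
by rewrite sec1 ltr_pdivrMr // mul1r.
Qed.

Lemma at_most_two_roots_in_gap a b :
  0 <= a -> (forall m, phi m <= a \/ b <= phi m) -> at_most_two_roots_in phi v z a b.
Proof.
move=> a_ge0 gap l1 l2 l3 l1_in l2_in l3_in.
move=> /is_root_fP[_ _ e1] /is_root_fP[_ _ e2] /is_root_fP[_ _ e3].
exact: secular_inv_eq1_at_most_twice l1_in l2_in l3_in e1 e2 e3.
Qed.

Lemma is_root_f_above_poles_uniq l l' :
  (forall m, phi m < l) -> (forall m, phi m < l') ->
  is_root_f phi v z l -> is_root_f phi v z l' -> l = l'.
Proof.
move=> above above' /is_root_fP[l_gt0 _ e] /is_root_fP[l'_gt0 _ e'].
apply: invr_inj; apply: (secular_inj d_gt0 w_gt0 phi_gt0 z_ge0);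
  rewrite ?invr_ge0 ?ltW ?e ?e' // => m; rewrite ltr_pdivrMr // mul1r;
  [exact: above | exact: above'].
Qed.

Lemma is_root_f_above_poles_exists (dm : 'I_d) : (forall m, phi m <= phi dm) ->
  exists l, phi dm < l /\ is_root_f phi v z l.
Proof.
move=> phi_le_max.
have [t [t_gt0 t_below sec1]] :=
  exists_secular_eq1_below_poles w_gt0 phi_gt0 z_ge0 phi_le_max.
have above : phi dm < t^-1 by rewrite -div1r ltr_pdivlMr.
exists t^-1; split => //; apply/is_root_fP; split; rewrite ?invr_gt0 ?invrK //.
by move=> m; rewrite gt_eqF // (le_lt_trans (phi_le_max m)).
Qed.

End SecularRoots.

Theorem lemma3 (R : rcfType) (d : nat) (z : R) (phi : 'I_d -> R)
  (v : 'I_d -> R[i]) (phimax : R)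
  (hd : (1 <= d)%N) (hz : 0 <= z)
  (hpos : forall m : 'I_d, 0 < phi m)
  (hsort : forall m n : 'I_d, (m <= n)%N -> phi m <= phi n)
  (hv : forall m : 'I_d, v m != 0)
  (hmax : forall dm : 'I_d, val dm = d.-1 -> phimax = phi dm) :
  (* (1) no roots smaller than or equal to z *)
  (forall l : R, is_root_f phi v z l -> z < l) /\
  (* (2) and (3): for phi_k the smallest eigenvalue larger than z *)
  (forall k : 'I_d, z < phi k -> (forall m : 'I_d, z < phi m -> phi k <= phi m) ->
     at_most_two_roots_in phi v z z (phi k) /\
     (forall L Lm1 : 'I_d, (k < L)%N -> val L = (val Lm1).+1 ->
        at_most_two_roots_in phi v z (phi Lm1) (phi L))) /\
  (* (4) a unique root in (max(phi_max, z), +oo) *)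
  (exists l : R, Num.max phimax z < l /\ is_root_f phi v z l /\
     forall l' : R, Num.max phimax z < l' -> is_root_f phi v z l' -> l' = l).
Proof.
have last_lt : (d.-1 < d)%N by rewrite ltn_predL.
pose dm := Ordinal last_lt.
have phi_le_max m : phi m <= phi dm.
  by apply: hsort; rewrite /= -ltnS prednK.
have root_gt_z l : is_root_f phi v z l -> z < l by apply: is_root_f_gt.
split=> //; split.
  move=> k z_lt_k k_min; split.
    apply: (at_most_two_roots_in_gap hd hpos hv) => // m.
    by case: (lerP (phi m) z) => [|/k_min]; [left | right].
  move=> L Lm1 _ L_succ.
  apply: (at_most_two_roots_in_gap hd hpos hv) => [|m]; first exact/ltW.
  case: (leqP m Lm1) => [/hsort | ]; first by left.
  by rewrite -ltnS -L_succ => /hsort; right.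
have [l [above root_l]] := is_root_f_above_poles_exists hz hpos hv phi_le_max.
have above_poles l' : Num.max phimax z < l' -> forall m, phi m < l'.
  by rewrite gt_max (hmax dm) // => /andP[max_l' _] m; apply: le_lt_trans max_l'.
exists l; split; first by rewrite gt_max (hmax dm) // above root_gt_z.
split=> // l' /above_poles above' root_l'.
have above_l m : phi m < l by apply: le_lt_trans above.
exact: (is_root_f_above_poles_uniq hd hz hpos hv above' above_l).
Qed.
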